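(* Let $p$ be a graph and $V_c(p)$ a vertex cover of $p$ such that the induced subgraph $p[V_c(p)]$ has at least two connected components. Let $Q$ be a set of join units of $p$ with respect to $V_c(p)$ whose union is $p$, and let $T$ be any join tree for $p$ over $Q$. Then $T$ has an internal node whose two children are labeled by subgraphs $p_1,p_2$ with $V(p_1)\cap V(p_2)\cap V_c(p)=\emptyset$.
   Context: Graphs are finite, simple and undirected. A vertex cover of $p$ is a set $V_c(p)\subseteq V(p)$ containing an endpoint of every edge of $p$; for $X\subseteq V(g)$, $g[X]$ denotes the subgraph of $g$ induced on $X$. A join unit of $p$ with respect to $V_c(p)$ is a subgraph $q$ of $p$ together with a designated anchor vertex $a_q\in V(q)\cap V_c(p)$ that is adjacent in $q$ to every other vertex of $q$ (an R1 unit). The union of subgraphs has as vertex set and edge set the unions of their vertex sets and edge sets. A join tree for $p$ over $Q$ is a rooted tree in which every internal node has exactly two children, each node is labeled by a subgraph of $p$, the leaves are labeled by elements of $Q$, each internal node is labeled by the union of its children's labels, and the root is labeled by $p$ (it models performing the joins pairwise in some order). *)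

From mathcomp Require Import all_boot.
Set Implicit Arguments. Unset Strict Implicit. Unset Printing Implicit Defensive.

Section Graphs.
Variable T : finType.

Definition graph := ({set T} * {set {set T}})%type.
Definition verts (g : graph) : {set T} := g.1.
Definition edges (g : graph) : {set {set T}} := g.2.

Definition is_graph (g : graph) : bool :=
  [forall e in edges g, (#|e| == 2) && (e \subset verts g)].

Definition subgraph (q p : graph) : bool :=
  is_graph q && (verts q \subset verts p) && (edges q \subset edges p).

Definition gunion (g h : graph) : graph :=
  (verts g :|: verts h, edges g :|: edges h).

Definition vertex_cover (p : graph) (Vc : {set T}) : bool :=
  (Vc \subset verts p) && [forall e in edges p, [exists x in e, x \in Vc]].

Definition induced (p : graph) (X : {set T}) : graph :=
  (verts p :&: X, [set e in edges p | e \subset X]).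

Definition adj (g : graph) : rel T :=
  fun x y => [set x; y] \in edges g.

Definition components (g : graph) : {set {set T}} :=
  [set [set y in verts g | connect (fun u v => (u \in verts g) && adj g u v) x y]
   | x in verts g].

Definition join_unit (p : graph) (Vc : {set T}) (qa : graph * T) : bool :=
  let: (q, a) := qa in
  [&& subgraph q p, a \in verts q, a \in Vc &
      [forall v in verts q, (v != a) ==> adj q a v]].

Definition union_of (Q : {set graph * T}) : graph :=
  (\bigcup_(qa in Q) verts qa.1, \bigcup_(qa in Q) edges qa.1).

Inductive jtree := JLeaf of (graph * T) | JNode of jtree & jtree.

Fixpoint label (t : jtree) : graph :=
  match t with
  | JLeaf qa => qa.1
  | JNode l r => gunion (label l) (label r)
  end.

Fixpoint leaves_in (Q : {set graph * T}) (t : jtree) : bool :=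
  match t with
  | JLeaf qa => qa \in Q
  | JNode l r => leaves_in Q l && leaves_in Q r
  end.

Definition join_tree (p : graph) (Q : {set graph * T}) (t : jtree) : Prop :=
  leaves_in Q t /\ label t = p.

Fixpoint has_internal (P : graph -> graph -> bool) (t : jtree) : bool :=
  match t with
  | JLeaf _ => false
  | JNode l r => P (label l) (label r) || has_internal P l || has_internal P r
  end.

End Graphs.

(* If no internal node of the join tree separates the Vc-parts of its two
   children, then by induction from the leaves the Vc-vertices of every node
   are connected in p[Vc]: at a leaf all of them are adjacent to the anchor,
   and at an internal node two connected sets sharing a vertex have a
   connected union.  At the root this makes p[Vc] connected, contradicting
   the assumption that it has at least two components. *)

From mathcomp Require Import all_boot.
Set Implicit Arguments. Unset Strict Implicit. Unset Printing Implicit Defensive.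

Lemma connect_setU (T : finType) (e : rel T) (A B : {set T}) :
  {in A &, forall u v, connect e u v} -> {in B &, forall u v, connect e u v} ->
  A :&: B != set0 -> {in A :|: B &, forall u v, connect e u v}.
Proof.
move=> eA eB /set0Pn [w]; rewrite inE => /andP [wA wB] u v.
by rewrite !inE => /orP [uA|uB] /orP [vA|vB];
  [exact: eA | apply: connect_trans (eA u w _ _) (eB w v _ _)
  | apply: connect_trans (eB u w _ _) (eA w v _ _) | exact: eB].
Qed.

Section JoinTrees.
Variable T : finType.

Definition edge_rel (g : graph T) : rel T := fun u v => (u \in verts g) && adj g u v.

Lemma edge_rel_sym (g : graph T) : is_graph g -> symmetric (edge_rel g).
Proof.
move=> gg; suff imp u v : edge_rel g u v -> edge_rel g v u.
  by move=> u v; apply/idP/idP; apply: imp.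
move=> /andP [_]; rewrite /adj => uv; have /andP [_ /subsetP uv_g] := implyP (forallP gg _) uv.
by rewrite /edge_rel /adj setUC uv andbT uv_g // !inE eqxx orbT.
Qed.

Lemma is_graph_induced (p : graph T) (X : {set T}) :
  is_graph p -> is_graph (induced p X).
Proof.
move=> gp; apply/forallP => e; apply/implyP; rewrite inE => /andP [ep eX].
have /andP [-> ep_p] := implyP (forallP gp e) ep.
by rewrite subsetI ep_p eX.
Qed.

Lemma card_components_le1 (g : graph T) :
  {in verts g &, forall u v, connect (edge_rel g) u v} -> #|components g| <= 1.
Proof.
move=> conn_g; apply/card_le1_eqP => _ _ /imsetP [x xg ->] /imsetP [y yg ->].
apply/setP => w; rewrite !inE; case: (w \in verts g) => //=.
by apply/idP/idP; apply: connect_trans; apply: conn_g.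
Qed.

Section InducedByCover.
Variables (p : graph T) (Vc : {set T}).
Hypothesis graph_p : is_graph p.

Local Notation linked A := {in A &, forall u v, connect (edge_rel (induced p Vc)) u v}.

Lemma join_unit_linked (q : graph T) (a : T) :
  join_unit p Vc (q, a) -> linked (verts q :&: Vc).
Proof.
move=> /and4P [/andP [/andP [_ /subsetP qp] /subsetP eqp] aq aVc /forallP a_adj].
have anchor_conn v : v \in verts q :&: Vc -> connect (edge_rel (induced p Vc)) a v.
  rewrite inE => /andP [vq vVc]; have [-> | v_a] := eqVneq v a; first exact: connect0.
  apply: connect1; move/implyP: (a_adj v); rewrite vq v_a => /(_ isT) av.
  rewrite /edge_rel /adj !inE qp //= aVc eqp //=.
  by apply/subsetP => x; rewrite !inE => /orP [] /eqP ->.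
have sym := sym_connect_sym (edge_rel_sym (is_graph_induced Vc graph_p)).
by move=> u v /anchor_conn au /anchor_conn av; rewrite sym in au; apply: connect_trans av.
Qed.

Lemma label_linked (Q : {set graph T * T}) (t : jtree T) :
  (forall qa, qa \in Q -> join_unit p Vc qa) -> leaves_in Q t ->
  ~~ has_internal (fun p1 p2 => verts p1 :&: verts p2 :&: Vc == set0) t ->
  linked (verts (label t) :&: Vc).
Proof.
move=> units; elim: t => [[q a] /units /join_unit_linked // | l IHl r IHr] /=.
move=> /andP [lQ rQ]; rewrite !negb_or => /andP [/andP [lr_meet nl] nr].
rewrite setIUl; apply: connect_setU; [exact: IHl | exact: IHr |].
by rewrite setIACA setIid.
Qed.

End InducedByCover.
End JoinTrees.

Theorem mainTheorem6 (T : finType) (p : graph T) (Vc : {set T})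
  (Q : {set graph T * T}) (t : jtree T) :
  is_graph p ->
  vertex_cover p Vc ->
  1 < #|components (induced p Vc)| ->
  (forall qa, qa \in Q -> join_unit p Vc qa) ->
  union_of Q = p ->
  join_tree p Q t ->
  has_internal
    (fun p1 p2 => verts p1 :&: verts p2 :&: Vc == set0) t.
Proof.
move=> graph_p _ many_components units _ [leaves_Q label_p].
apply/negPn/negP => no_separation.
have := label_linked graph_p units leaves_Q no_separation.
rewrite label_p => /(card_components_le1 (g := induced p Vc)).
by rewrite leqNgt many_components.
Qed.
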